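(* Let $\mathcal C\subseteq\{0,1\}^n$ and $\mathcal D\subseteq\{0,1\}^m$ be neural codes and $\phi:R_\mathcal D\to R_\mathcal C$ a ring isomorphism. Then $\phi$ is a neural ring isomorphism if and only if the associated code map $q_\phi:\mathcal C\to\mathcal D$ is a permutation of labels, i.e. $m=n$ and there is a permutation $\sigma$ of $[n]$ such that $q_\phi(c)=(c_{\sigma(1)},\dots,c_{\sigma(n)})$ for all $c\in\mathcal C$ and $q_\phi$ is a bijection onto $\mathcal D$.
   Context: For a code $\mathcal C\subseteq\{0,1\}^n$, $R_\mathcal C$ is the ring of all functions $\mathcal C\to\mathbb F_2$, and $R[n]=R_{\{0,1\}^n}=\mathbb F_2[x_1,\dots,x_n]/\langle x_i^2-x_i\rangle$; $R_\mathcal C$ is an $R[n]$-module via $(r\cdot f)(c)=r(c)f(c)$. $\rho_c$ denotes the indicator function of $\{c\}$. For a ring homomorphism $\phi:R_\mathcal D\to R_\mathcal C$, the associated code map $q_\phi:\mathcal C\to\mathcal D$ sends $c$ to the unique $d\in\mathcal D$ with $\phi(\rho_d)(c)=1$. A ring homomorphism $\tau:R[m]\to R[n]$ is compatible with $\phi$ if $\phi(r\cdot f)=\tau(r)\cdot\phi(f)$ for all $r\in R[m]$, $f\in R_\mathcal D$; it is linear-monomial if $\tau(x_i)\in\{x_1,\dots,x_n,0,1\}$ for all $i$. A neural ring isomorphism is a ring isomorphism $\phi:R_\mathcal D\to R_\mathcal C$ for which there exists a compatible linear-monomial ring isomorphism $\tau:R[m]\to R[n]$. *)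

From HB Require Import structures.
From mathcomp Require Import all_boot all_order all_algebra all_fingroup.
Set Implicit Arguments. Unset Strict Implicit. Unset Printing Implicit Defensive.
Import GRing.Theory.
Local Open Scope ring_scope.

Definition word (n : nat) : finType := {ffun 'I_n -> bool}.

Definition codeT (n : nat) (C : {set word n}) : finType := {c : word n | c \in C}.

Definition RC (n : nat) (C : {set word n}) : pzRingType := {ffun codeT C -> 'F_2}.

(* R[n] = R_{{0,1}^n} : functions {0,1}^n -> F_2, which is
   F_2[x_1..x_n]/<x_i^2 - x_i>; x_i is the i-th coordinate function. *)
Definition Rn (n : nat) : pzRingType := {ffun word n -> 'F_2}.

Definition xvar (n : nat) (i : 'I_n) : Rn n := [ffun v : word n => (v i : nat)%:R].

Definition rho (n : nat) (C : {set word n}) (c : codeT C) : RC C :=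
  [ffun c' => (c' == c : nat)%:R].

Definition act (n : nat) (C : {set word n}) (r : Rn n) (f : RC C) : RC C :=
  [ffun c => r (val c) * f c].

(* The code map q_phi : C -> D, c |-> the unique d in D with phi(rho_d)(c) = 1.
   (Default value used only if no such d exists, which never happens for
   ring homomorphisms.) *)
Definition qmap (n m : nat) (C : {set word n}) (D : {set word m})
  (phi : RC D -> RC C) (c : codeT C) : word m :=
  odflt [ffun _ => false]
    (omap val [pick d : codeT D | phi (rho d) c == 1]).

Definition compatible (n m : nat) (C : {set word n}) (D : {set word m})
  (phi : RC D -> RC C) (tau : Rn m -> Rn n) : Prop :=
  forall (r : Rn m) (f : RC D), phi (act r f) = act (tau r) (phi f).

Definition linear_monomial (n m : nat) (tau : Rn m -> Rn n) : Prop :=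
  forall i : 'I_m, (exists j : 'I_n, tau (xvar i) = xvar j)
                   \/ tau (xvar i) = 0 \/ tau (xvar i) = 1.

Definition neural_ring_iso (n m : nat) (C : {set word n}) (D : {set word m})
  (phi : {rmorphism RC D -> RC C}) : Prop :=
  bijective phi /\
  exists tau : {rmorphism Rn m -> Rn n},
    bijective tau /\ linear_monomial tau /\ compatible phi tau.

Definition perm_of_labels (n m : nat) (C : {set word n}) (D : {set word m})
  (q : codeT C -> word m) : Prop :=
  exists (e : m = n) (sigma : 'S_n),
    (forall c : codeT C, q c = [ffun j : 'I_m => val c (sigma (cast_ord e j))])
    /\ (forall c, q c \in D)
    /\ injective q
    /\ (forall d, d \in D -> exists c, q c = d).

From HB Require Import structures.
From mathcomp Require Import all_boot all_order all_algebra all_fingroup.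
Set Implicit Arguments. Unset Strict Implicit. Unset Printing Implicit Defensive.
Import GRing.Theory.
Local Open Scope ring_scope.

(** A ring morphism between rings of F_2-valued functions on finite sets is the
    pullback [comap p] along a map of points: at a point u exactly one
    indicator [indic t] is sent to a function that is 1 at u, and [p u] is that
    t; in particular [q_phi = p]. Evaluating compatibility at [r = x_j],
    [f = 1] gives [tau x_j (c) = (q_phi c)_j]. A bijective linear-monomial
    [tau] cannot send [x_j] to 0 or 1, so it sends [x_j] to [x_(pi j)] for an
    injective [pi], and [m = n] by counting; hence [q_phi] permutes labels.
    Conversely, for a permutation of labels, the pullback along the coordinate
    permutation is a compatible linear-monomial automorphism of R[n]. *)

Section PointwiseRing.
Variables (T : finType) (R : pzSemiRingType).

Lemma ffunME (f g : {ffun T -> R}) x : (f * g) x = f x * g x.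
Proof. by rewrite ffunE. Qed.

Lemma ffun1E x : (1 : {ffun T -> R}) x = 1.
Proof. by rewrite ffunE. Qed.

End PointwiseRing.

Section Comap.
Variables (T U : finType) (R : pzRingType).

Definition comap (p : U -> T) (g : {ffun T -> R}) : {ffun U -> R} :=
  [ffun u => g (p u)].

Lemma comapE p g u : comap p g u = g (p u).
Proof. by rewrite ffunE. Qed.

Fact comap_is_zmod_morphism p : zmod_morphism (comap p).
Proof. by move=> f g; apply/ffunP => u; rewrite !ffunE. Qed.

Fact comap_is_monoid_morphism p : monoid_morphism (comap p).
Proof. by split=> [|f g]; apply/ffunP => u; rewrite !ffunE. Qed.

HB.instance Definition _ p :=
  GRing.isZmodMorphism.Build _ _ (comap p) (comap_is_zmod_morphism p).
HB.instance Definition _ p :=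
  GRing.isMonoidMorphism.Build _ _ (comap p) (comap_is_monoid_morphism p).

End Comap.

Lemma comapK (T U : finType) (R : pzRingType) (p : U -> T) (p' : T -> U) :
  cancel p' p -> cancel (@comap T U R p) (comap p').
Proof. by move=> pK g; apply/ffunP => t; rewrite !ffunE pK. Qed.

Definition indic (T : finType) (R : pzSemiRingType) (t : T) : {ffun T -> R} :=
  [ffun x => (x == t)%:R].

Section ComapInjSurj.
Variables (T U : finType) (R : nzRingType) (p : U -> T).

Lemma comap_surj_inj :
  (forall h : {ffun U -> R}, exists g, comap p g = h) -> injective p.
Proof.
move=> comap_surj u1 u2 eq_p; have [g gE] := comap_surj (indic R u1).
have /ffunP/(_ u2) := gE; rewrite comapE -eq_p -comapE gE !ffunE eqxx.
by case: eqP => [->|_] //= /eqP; rewrite oner_eq0.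
Qed.

Lemma comap_inj_surj : injective (@comap T U R p) -> forall t, exists u, p u = t.
Proof.
move=> comap_inj t; suff /existsP[u /eqP] : [exists u, p u == t] by exists u.
apply: contraT => /existsPn not_hit.
have : comap p (indic R t) = comap p 0.
  by apply/ffunP => u; rewrite rmorph0 !ffunE (negbTE (not_hit u)).
move/comap_inj/ffunP/(_ t); rewrite !ffunE eqxx.
by move/eqP; rewrite oner_eq0.
Qed.

End ComapInjSurj.

Lemma F2_natrb_inj (b1 b2 : bool) :
  (b1 : nat)%:R = (b2 : nat)%:R :> 'F_2 -> b1 = b2.
Proof. by case: b1; case: b2 => // /eqP; rewrite ?oner_eq0 // eq_sym oner_eq0. Qed.

Section F2FunctionRings.
Variables (T U : finType) (phi : {rmorphism {ffun T -> 'F_2} -> {ffun U -> 'F_2}}).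

Lemma sum_indic : \sum_(t : T) indic 'F_2 t = 1.
Proof.
apply/ffunP => x; rewrite sum_ffunE ffun1E (bigD1 x) //= big1 => [|y /negbTE ne_yx].
  by rewrite ffunE eqxx addr0.
by rewrite ffunE eq_sym ne_yx.
Qed.

Lemma indicM (t : T) (g : {ffun T -> 'F_2}) :
  indic _ t * g = (g t : nat)%:R * indic _ t.
Proof.
apply/ffunP => x; rewrite ffunME !ffunE.
rewrite (ffunMnE (1 : {ffun T -> 'F_2})) ffun1E natr_Zp.
by case: eqP => [->|_]; rewrite ?mulr1n ?mul1r ?mulr1 ?mulr0n ?mulr0 ?mul0r.
Qed.

Lemma rmorph_F2_point u : exists t, forall g, phi g u = g t.
Proof.
(* The indicators sum to 1, so one of them is not killed at u; being
   idempotent, its image is 1 at u. *)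
have [t phit_neq0] : exists t, phi (indic _ t) u != 0.
  apply/existsP; apply: contraT => /existsPn all0.
  move/ffunP/(_ u): (rmorph1 phi); rewrite -sum_indic rmorph_sum.
  rewrite sum_ffunE big1 => [|t _]; last exact/eqP/negbNE/all0.
  by rewrite ffun1E => /eqP; rewrite eq_sym oner_eq0.
have phit1 : phi (indic _ t) u = 1.
  apply: (mulfI phit_neq0); rewrite mulr1 -ffunME -rmorphM.
  congr (phi _ u); apply/ffunP => x.
  by rewrite ffunME ffunE; case: eqP; rewrite ?mulr1 ?mulr0.
exists t => g; rewrite -[LHS]mul1r -phit1 -ffunME -rmorphM indicM.
by rewrite rmorphM rmorph_nat ffunME phit1 mulr1 ffunMnE ffun1E natr_Zp.
Qed.

Lemma rmorph_F2_comap : exists p : U -> T, phi =1 comap p.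
Proof.
have [p pE] := fin_all_exists rmorph_F2_point.
by exists p => g; apply/ffunP => u; rewrite comapE pE.
Qed.

End F2FunctionRings.

Lemma card_Rn n : #|{ffun word n -> 'F_2}| = (2 ^ 2 ^ n)%N.
Proof. by rewrite card_ffun card_Fp // card_ffun card_bool card_ord. Qed.

Lemma Rn_bij_eq (m n : nat) (tau : Rn m -> Rn n) : bijective tau -> m = n.
Proof.
move=> /(@bij_eq_card {ffun word m -> 'F_2} {ffun word n -> 'F_2}).
by rewrite !card_Rn => /eqP; rewrite eqn_exp2l // eqn_exp2l // => /eqP.
Qed.

Lemma xvar_neq0 n (i : 'I_n) : xvar i != 0.
Proof.
by apply/eqP => /ffunP/(_ [ffun => true]); rewrite !ffunE => /eqP; rewrite oner_eq0.
Qed.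

Lemma xvar_neq1 n (i : 'I_n) : xvar i != 1.
Proof.
apply/eqP => /ffunP/(_ [ffun => false]); rewrite !ffunE.
by move/eqP; rewrite eq_sym oner_eq0.
Qed.

Lemma xvar_inj n : injective (@xvar n).
Proof.
move=> i j /ffunP/(_ [ffun k => k == i]); rewrite !ffunE eqxx.
by move/F2_natrb_inj/esym/eqP.
Qed.

Lemma linear_monomial_bij_xvar m n (tau : {rmorphism Rn m -> Rn n}) :
  bijective tau -> linear_monomial tau ->
  exists2 pi : 'I_m -> 'I_n, injective pi & forall i, tau (xvar i) = xvar (pi i).
Proof.
move=> /bij_inj tau_inj tau_lm.
have /fin_all_exists[pi tauE] : forall i, exists j, tau (xvar i) = xvar j.
  move=> i; case: (tau_lm i) => [//|[] tau_x].
  - by case/eqP: (xvar_neq0 i); apply: tau_inj; rewrite tau_x rmorph0.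
  - by case/eqP: (xvar_neq1 i); apply: tau_inj; rewrite tau_x rmorph1.
by exists pi => // i j eq_pi; apply/xvar_inj/tau_inj; rewrite !tauE eq_pi.
Qed.

Definition relabel n (s : 'S_n) (v : word n) : word n := [ffun j => v (s j)].

Section CodeMap.
Variables (n m : nat) (C : {set word n}) (D : {set word m}).
Variables (phi : RC D -> RC C) (p : codeT C -> codeT D).
Hypothesis phiE : phi =1 comap p.

Lemma qmap_comap c : qmap phi c = val (p c).
Proof.
rewrite /qmap; case: pickP => [d | /(_ (p c))]; rewrite phiE comapE /rho ffunE.
  by case: (p c =P d) => [-> //|_]; rewrite eq_sym oner_eq0.
by rewrite eqxx.
Qed.

Lemma qmap_bij_onto : bijective phi ->
  [/\ forall c, qmap phi c \in D, injective (qmap phi)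
    & forall d, d \in D -> exists c, qmap phi c = d].
Proof.
move=> phi_bij; have p_inj : injective p.
  apply: comap_surj_inj => h; have [psi _ phiK] := phi_bij.
  by exists (psi h); rewrite -phiE phiK.
have p_surj : forall d, exists c, p c = d.
  apply: (@comap_inj_surj _ _ 'F_2) => f g.
  by rewrite -!phiE => /(bij_inj phi_bij).
split=> [c | c1 c2 | d dD]; rewrite ?qmap_comap.
- exact: valP.
- by move/val_inj/p_inj.
- by have [c pc] := p_surj (Sub d dD); exists c; rewrite qmap_comap pc.
Qed.

Lemma compatible_xvar (tau : Rn m -> Rn n) : compatible phi tau ->
  forall j c, tau (xvar j) (val c) = (val (p c) j : nat)%:R.
Proof.
move=> tau_compat j c; move/ffunP/(_ c): (tau_compat (xvar j) 1).
by rewrite !phiE !comapE !ffunE !mulr1.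
Qed.

Lemma compatible_comap (t : word n -> word m) :
  (forall c, val (p c) = t (val c)) -> compatible phi (comap t).
Proof. by move=> pE r f; apply/ffunP => c; rewrite !phiE !ffunE pE. Qed.

End CodeMap.

Theorem corollary1 (n m : nat) (C : {set word n}) (D : {set word m})
  (phi : {rmorphism RC D -> RC C}) :
  bijective phi ->
  (neural_ring_iso phi <-> @perm_of_labels n m C D (qmap phi)).
Proof.
move=> phi_bij; have [p phiE] := rmorph_F2_comap phi.
have [qD q_inj q_onto] := qmap_bij_onto phiE phi_bij.
split.
- case=> _ [tau [tau_bij [tau_lm tau_compat]]].
  have eq_mn := Rn_bij_eq tau_bij; subst m.
  have [pi pi_inj tauE] := linear_monomial_bij_xvar tau_bij tau_lm.
  exists erefl, (perm pi_inj); split=> // c; rewrite (qmap_comap phiE).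
  apply/ffunP => j; rewrite ffunE cast_ord_id permE; apply: F2_natrb_inj.
  by rewrite -(compatible_xvar phiE tau_compat) tauE ffunE.
- case=> eq_mn [s [qE _]]; subst m; split=> //.
  exists (comap (relabel s)); split; [|split].
  + by exists (comap (relabel s^-1)); apply: comapK => v;
      apply/ffunP => j; rewrite !ffunE ?permK ?permKV.
  + by move=> i; left; exists (s i); apply/ffunP => v; rewrite !ffunE.
  + apply: (compatible_comap phiE) => c; rewrite -(qmap_comap phiE) qE.
    by apply/ffunP => j; rewrite !ffunE cast_ord_id.
Qed.
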